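(* Let $M\in\mathbb{W}^{n\times n}$ and let $\mathcal{I}_m\subseteq\mathcal{I}_{m-1}\subseteq\dots\subseteq\mathcal{I}_1\subseteq\{1,\dots,n\}$ with $\mathcal{I}_m$ nonempty. If the principal submatrix of $M$ indexed by $\{1,\dots,n\}\setminus\mathcal{I}_m$ is upper triangular with nonzero diagonal, then the successive reduction $r(M;\mathcal{I}_1,\dots,\mathcal{I}_{m-1},\mathcal{I}_m)$ is defined and $r(M;\mathcal{I}_1,\dots,\mathcal{I}_{m-1},\mathcal{I}_m)=r(M;\mathcal{I}_m)$.
   Context: $\mathbb{W}$ is the field of rational functions in a complex variable $\lambda$ with complex coefficients. For $M\in\mathbb{W}^{n\times n}$ and an index set $\mathcal{I}=\{i_1<\dots<i_k\}\subseteq\{1,\dots,n\}$, the principal submatrix indexed by $\mathcal{I}$ is the $k\times k$ matrix with $(s,t)$ entry $M_{i_si_t}$ (indices kept in increasing order; ''upper triangular'' refers to this order). For nonempty $\mathcal{I}$ with complement $\bar{\mathcal{I}}=\{1,\dots,n\}\setminus\mathcal{I}$: if $\mathcal{I}=\{1,\dots,n\}$ set $r(M;\mathcal{I})=M$; otherwise let $A$ be the principal submatrix indexed by $\bar{\mathcal{I}}$, $D$ that indexed by $\mathcal{I}$, $B$ the submatrix with rows $\bar{\mathcal{I}}$ and columns $\mathcal{I}$, $C$ the submatrix with rows $\mathcal{I}$ and columns $\bar{\mathcal{I}}$; if $A$ is invertible, the reduction of $M$ over $\mathcal{I}$ is $r(M;\mathcal{I})=D-CA^{-1}B$, a matrix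 whose rows and columns are indexed by the elements of $\mathcal{I}$ in increasing order. For $\mathcal{J}\subseteq\mathcal{I}$ define $r(M;\mathcal{I},\mathcal{J})=r(r(M;\mathcal{I});\mathcal{J})$ (with $\mathcal{J}$ read as a set of indices of $r(M;\mathcal{I})$), and similarly for longer nested sequences, provided each step is defined. *)

From mathcomp Require Import all_boot all_algebra.
From mathcomp Require Import fraction complex Rstruct.
Set Implicit Arguments. Unset Strict Implicit. Unset Printing Implicit Defensive.
Import GRing.Theory.
Local Open Scope ring_scope.

Definition W : fieldType := {fraction {poly (Rdefinitions.R)[i]}}.

(* Principal submatrix of M indexed by S (elements of S in increasing order:
   enum_val enumerates S following the increasing order of 'I_n). *)
Definition psub (F : fieldType) n (M : 'M[F]_n) (S : {set 'I_n}) : 'M[F]_#|S| :=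
  \matrix_(s, t) M (enum_val s) (enum_val t).

Definition upper_tri_nzdiag (F : fieldType) k (A : 'M[F]_k) : Prop :=
  (forall s t : 'I_k, (t < s)%N -> A s t = 0) /\ (forall s : 'I_k, A s s != 0).

(* Representation convention: a matrix "whose rows and columns are indexed by
   the elements of U" (U a subset of {1..n}) is stored as an n x n matrix whose
   entries (i,j) with i,j in U are the meaningful ones; entries outside U x U
   are set to 0 in outputs of [red] and are never read. *)
Definition red (F : fieldType) n (U : {set 'I_n}) (M : 'M[F]_n) (I : {set 'I_n})
  : option 'M[F]_n :=
  if (I != set0) && (I \subset U) then
    if I == U then
      Some (\matrix_(i, j) if (i \in I) && (j \in I) then M i j else 0)
    else
      let A := psub M (U :\: I) in
      if A \in unitmx then
        let Ai := invmx A in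
        Some (\matrix_(i, j)
          if (i \in I) && (j \in I) then
            M i j - \sum_(s < #|U :\: I|) \sum_(t < #|U :\: I|)
                      M i (enum_val s) * Ai s t * M (enum_val t) j
          else 0)
      else None
  else None.

Fixpoint red_seq (F : fieldType) n (U : {set 'I_n}) (M : 'M[F]_n)
  (Is : seq {set 'I_n}) : option 'M[F]_n :=
  match Is with
  | [::] => Some M
  | J :: Js => obind (fun M' => red_seq J M' Js) (red U M J)
  end.

(* Row i of the reduction r(M; I) of a U-indexed matrix is x M restricted to I,
   where x is the unique row vector that agrees with e_i outside the eliminated
   set U \ I and for which x M vanishes on U \ I; uniqueness of x is exactly the
   invertibility of the eliminated block. For K <= J <= U, composing such rows
   for the reductions over J and then over K produces a row with the defining
   property for the one-step reduction over K: this gives the quotient formula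
   r(r(M; J); K) = r(M; K), together with the invertibility of the intermediate
   block. Along the nested chain every eliminated block is a principal
   submatrix of the triangular block indexed by the complement of I_m, hence
   invertible, and the formula iterates. *)

From mathcomp Require Import all_boot all_algebra.
Set Implicit Arguments. Unset Strict Implicit. Unset Printing Implicit Defensive.
Import GRing.Theory.
Local Open Scope ring_scope.

Section Reduction.
Variables (F : fieldType) (n : nat).
Implicit Types (X Y U I J K : {set 'I_n}) (M T : 'M[F]_n).

Lemma ltn_enum_val (S : {set 'I_n}) : {mono @enum_val _ (mem S) : a b / (a < b)%N}.
Proof.
have ltT : transitive (fun a b : 'I_n => (a < b)%N) by move=> b a c; apply: ltn_trans.
have sortS : sorted (fun a b : 'I_n => (a < b)%N) (enum S).
  apply: (subseq_sorted ltT (s2 := enum 'I_n)); first by rewrite enumT filter_subseq.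
  by have := iota_ltn_sorted 0 n; rewrite -val_enum_ord sorted_map.
have homoS : {homo @enum_val _ (mem S) : a b / (a < b)%N}.
  move=> a b ab; rewrite /enum_val (set_nth_default (enum_default a)) -?cardE //.
  by apply: (sorted_ltn_nth ltT) => //; rewrite inE -cardE.
move=> a b; apply/idP/idP => [|/homoS //]; apply: contraTT.
by rewrite -!leqNgt leq_eqVlt => /orP[/eqP/val_inj -> // | /homoS/ltnW].
Qed.

Lemma psub_unitmx_sub M X Y :
  X \subset Y -> upper_tri_nzdiag (psub M Y) -> psub M X \in unitmx.
Proof.
move=> XY [triY diagY].
have inY s : enum_val s \in Y := subsetP XY _ (enum_valP s).
pose r (s : 'I_#|X|) := enum_rank_in (inY s) (enum_val s).
have psubXE s t : psub M X s t = psub M Y (r s) (r t) by rewrite !mxE !enum_rankK_in.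
have ltn_r : {mono r : s t / (s < t)%N}.
  by move=> s t; rewrite -ltn_enum_val !enum_rankK_in // ltn_enum_val.
rewrite unitmxE unitfE -det_tr det_trig.
  by rewrite prodf_seq_neq0; apply/allP => s _; rewrite mxE psubXE diagY.
by apply/is_trig_mxP => s t st; rewrite mxE psubXE triY ?ltn_r.
Qed.

Definition sel_mx X : 'M[F]_(#|X|, n) := rowsub (@enum_val _ (mem X)) 1%:M.

Lemma sel_mx_out X s k : k \notin X -> sel_mx X s k = 0.
Proof. by rewrite !mxE; case: eqP => // <-; rewrite enum_valP. Qed.

Lemma mulmx_sel_trE m X (A : 'M[F]_(m, n)) i s :
  (A *m (sel_mx X)^T) i s = A i (enum_val s).
Proof. by rewrite trmx_mxsub trmx1 mulmx_colsub mulmx1 mxE. Qed.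

Lemma sel_mx_mulE m X (A : 'M[F]_(n, m)) s j :
  (sel_mx X *m A) s j = A (enum_val s) j.
Proof. by rewrite mul_rowsub_mx mul1mx mxE. Qed.

Lemma mulmx_sel_out m X (A : 'M[F]_(m, #|X|)) i k :
  k \notin X -> (A *m sel_mx X) i k = 0.
Proof. by move=> kX; rewrite mxE big1 // => s _; rewrite sel_mx_out ?mulr0. Qed.

Lemma psub_sel M X : psub M X = sel_mx X *m M *m (sel_mx X)^T.
Proof. by apply/matrixP => s t; rewrite mulmx_sel_trE sel_mx_mulE mxE. Qed.

Lemma sel_mx_mul_tr X : sel_mx X *m (sel_mx X)^T = 1%:M.
Proof.
by apply/matrixP => s t; rewrite mulmx_sel_trE !mxE (inj_eq enum_val_inj).
Qed.

Lemma mulmx_sel_tr_sel m X (A : 'M[F]_(m, n)) :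
  (forall i, {in ~: X, forall k, A i k = 0}) ->
  A *m (sel_mx X)^T *m sel_mx X = A.
Proof.
move=> A0; apply/matrixP => i k; rewrite mxE.
under eq_bigr do rewrite mulmx_sel_trE !mxE.
rewrite -(big_enum_val (fun l => A i l * (l == k)%:R)) /= big_mkcond /=.
rewrite (bigD1 k) //= eqxx mulr1 big1 => [|l /negbTE lk]; last by rewrite lk mulr0 if_same.
by rewrite addr0; case: ifP => // /negbT kX; rewrite A0 ?inE.
Qed.

Lemma mulmx_sel_tr_eq0P m X (A : 'M[F]_(m, n)) :
  A *m (sel_mx X)^T = 0 <-> forall i, {in X, forall t, A i t = 0}.
Proof.
split=> [A0 i t tX | A0]; last first.
  by apply/matrixP => i s; rewrite mulmx_sel_trE A0 ?mxE ?enum_valP.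
by rewrite -(enum_rankK_in tX tX) -mulmx_sel_trE A0 mxE.
Qed.

Lemma psub_unitmxP M X :
  reflect (forall x : 'rV[F]_n, {in ~: X, forall k, x 0 k = 0} ->
             {in X, forall t, (x *m M) 0 t = 0} -> x = 0)
          (psub M X \in unitmx).
Proof.
apply: (iffP idP) => [unitA x x_supp x_ker | ker].
  have xE : x = x *m (sel_mx X)^T *m sel_mx X.
    by rewrite mulmx_sel_tr_sel // => i; rewrite [i]ord1.
  have : x *m (sel_mx X)^T *m psub M X = 0.
    rewrite psub_sel !mulmxA -xE.
    by apply/mulmx_sel_tr_eq0P => i; rewrite [i]ord1.
  by move=> x_ker0; rewrite xE -(mulmxK unitA (x *m _)) x_ker0 !mul0mx.
rewrite unitmxE unitfE; apply/negP => /det0P[v v_neq0 v_ker].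
have v0 : v *m sel_mx X = 0.
  apply: ker => [k | ]; first by rewrite inE; apply: mulmx_sel_out.
  by move: v_ker; rewrite psub_sel !mulmxA => /mulmx_sel_tr_eq0P; apply.
by move: v_neq0; rewrite -[v]mulmx1 -(sel_mx_mul_tr X) mulmxA v0 mul0mx eqxx.
Qed.

(* Row i of [schur_elim X M] is e_i plus the combination of the e_k, k in X,
   that clears the columns X of M; [schur X M] is the Schur complement
   M - M[., X] M[X, X]^-1 M[X, .]. *)
Definition schur_elim X M : 'M[F]_n :=
  1%:M - M *m (sel_mx X)^T *m invmx (psub M X) *m sel_mx X.

Definition schur X M : 'M[F]_n := schur_elim X M *m M.

Lemma mulmx_schur_elim_out X M (x : 'rV[F]_n) k :
  k \notin X -> (x *m schur_elim X M) 0 k = x 0 k.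
Proof.
by move=> kX; rewrite mulmxBr mulmx1 !mulmxA mxE [in X in _ + X]mxE mulmx_sel_out ?subr0.
Qed.

Lemma schur_elim_ker X M m (A : 'M[F]_(m, n)) :
  psub M X \in unitmx ->
  forall i, {in X, forall t, (A *m schur_elim X M *m M) i t = 0}.
Proof.
move=> unitA; apply/mulmx_sel_tr_eq0P.
have GM0 : schur_elim X M *m M *m (sel_mx X)^T = 0.
  rewrite !mulmxBl !mul1mx -!mulmxA (mulmxA (sel_mx X) M) -psub_sel.
  by rewrite mulVmx // mulmx1 subrr.
by rewrite -!mulmxA (mulmxA (schur_elim X M)) GM0 mulmx0.
Qed.

Lemma schur_elim_rowP X M i (x : 'rV[F]_n) :
  psub M X \in unitmx ->
  {in ~: X, forall k, x 0 k = (k == i)%:R} ->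
  {in X, forall t, (x *m M) 0 t = 0} ->
  x = row i (schur_elim X M).
Proof.
move=> unitA x_out x_ker; apply/eqP; rewrite -subr_eq0; apply/eqP.
apply: (psub_unitmxP _ _ unitA) => [k kX | t tX].
  rewrite mxE [in X in _ + X]mxE rowE mulmx_schur_elim_out -?in_setC //.
  by rewrite x_out // !mxE eqxx subrr.
by rewrite mulmxBl mxE [in X in _ + X]mxE rowE x_ker // schur_elim_ker // subr0.
Qed.

Definition mask I M : 'M[F]_n :=
  \matrix_(i, j) if (i \in I) && (j \in I) then M i j else 0.

Lemma mulmx_mask I M (x : 'rV[F]_n) t :
  {in ~: I, forall k, x 0 k = 0} -> t \in I -> (x *m mask I M) 0 t = (x *m M) 0 t.
Proof.
move=> x0 tI; rewrite !mxE; apply: eq_bigr => k _; rewrite mxE tI andbT.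
by case: ifP => // /negbT kI; rewrite x0 ?inE // !mul0r.
Qed.

Lemma redE U I M :
  I != set0 -> I \subset U -> psub M (U :\: I) \in unitmx ->
  red U M I = Some (mask I (schur (U :\: I) M)).
Proof.
move=> I0 IU unitA; rewrite /red I0 IU /=; case: eqP => [<- | _].
  have sel0 : sel_mx (I :\: I) = 0.
    by apply/matrixP => s k; case/setDP: (enum_valP s) => ->.
  by rewrite /schur /schur_elim sel0 mulmx0 subr0 mul1mx.
rewrite unitA; congr Some; apply/matrixP => i j; rewrite mxE [RHS]mxE.
case: ifP => // _; rewrite /schur mulmxBl mul1mx mxE [in RHS]mxE; congr (_ - _).
rewrite -!mulmxA mulmxA mxE; apply: eq_bigr => s _.
rewrite mulmx_sel_trE mxE mulr_sumr; apply: eq_bigr => t _.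
by rewrite sel_mx_mulE mulrA.
Qed.

Section Quotient.
Variables (U J K : {set 'I_n}) (M : 'M[F]_n).
Hypotheses (KJ : K \subset J) (JU : J \subset U).
Hypotheses (unitJ : psub M (U :\: J) \in unitmx) (unitK : psub M (U :\: K) \in unitmx).
Local Notation T := (mask J (schur (U :\: J) M)).

Let UK_UJ : ~: (U :\: K) \subset ~: (U :\: J).
Proof. by rewrite setCS setDS. Qed.

Let UK_JK : ~: (U :\: K) \subset ~: (J :\: K).
Proof. by rewrite setCS setSD. Qed.

Lemma schur_elim_lift_ker (w : 'rV[F]_n) :
  {in ~: J, forall k, w 0 k = 0} -> {in J :\: K, forall t, (w *m T) 0 t = 0} ->
  {in U :\: K, forall t, (w *m schur_elim (U :\: J) M *m M) 0 t = 0}.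
Proof.
move=> w0 wT t /setDP[tU tK]; have [tJ | tJ] := boolP (t \in J).
  by rewrite -mulmxA -[_ *m M]/(schur _ M) -(mulmx_mask (I := J)) // wT // inE tJ tK.
by rewrite schur_elim_ker // inE tJ.
Qed.

Lemma schur_psub_unitmx : psub T (J :\: K) \in unitmx.
Proof.
apply/psub_unitmxP => w w0 wT.
have w0J : {in ~: J, forall k, w 0 k = 0}.
  by move=> k; rewrite !inE => kJ; rewrite w0 // !inE (negbTE kJ) andbF.
have Z0 : w *m schur_elim (U :\: J) M = 0.
  apply: (psub_unitmxP _ _ unitK) => [k | ]; last exact: schur_elim_lift_ker.
  move=> kUK; rewrite mulmx_schur_elim_out ?w0 ?(subsetP UK_JK) //.
  by rewrite -in_setC (subsetP UK_UJ).
apply/rowP => k; have [kJ | kJ] := boolP (k \in J).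
  by rewrite -(mulmx_schur_elim_out (X := U :\: J) M) ?Z0 ?mxE // inE kJ.
by rewrite w0J ?mxE ?inE.
Qed.

Lemma schur_schur : mask K (schur (J :\: K) T) = mask K (schur (U :\: K) M).
Proof.
apply/matrixP => i j; rewrite mxE [RHS]mxE; case: ifP => // /andP[iK jK].
pose y := row i (schur_elim (J :\: K) T).
have y_out : {in ~: (J :\: K), forall k, y 0 k = (k == i)%:R}.
  by move=> k kJK; rewrite /y rowE mulmx_schur_elim_out -?in_setC // !mxE eqxx.
have y0 : {in ~: J, forall k, y 0 k = 0}.
  move=> k kJ; rewrite y_out; last by apply: subsetP kJ; rewrite setCS subsetDl.
  by case: eqP kJ => // ->; rewrite inE (subsetP KJ).
have yE : y *m schur_elim (U :\: J) M = row i (schur_elim (U :\: K) M).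
  apply: schur_elim_rowP unitK _ _ => [k kUK | ].
    by rewrite mulmx_schur_elim_out ?y_out ?(subsetP UK_JK) // -in_setC (subsetP UK_UJ).
  apply: schur_elim_lift_ker y0 _ => t tJK.
  by rewrite /y rowE schur_elim_ker // schur_psub_unitmx.
have -> : schur (J :\: K) T i j = (y *m T) 0 j by rewrite /y -row_mul [RHS]mxE.
by rewrite (mulmx_mask (I := J)) ?(subsetP KJ) // /schur mulmxA yE -row_mul mxE.
Qed.
End Quotient.

Lemma red_red U J K M :
  K != set0 -> K \subset J -> J \subset U ->
  psub M (U :\: J) \in unitmx -> psub M (U :\: K) \in unitmx ->
  exists2 T, red U M J = Some T & red J T K = red U M K.
Proof.
move=> K0 KJ JU unitJ unitK.
have J0 : J != set0 by apply: contraNneq K0 => J0; rewrite -subset0 -J0.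
exists (mask J (schur (U :\: J) M)); first exact: redE.
rewrite (redE K0 KJ (schur_psub_unitmx KJ JU unitJ unitK)).
by rewrite (redE K0 (subset_trans KJ JU) unitK) (schur_schur KJ JU unitJ unitK).
Qed.

Lemma red_seq_rcons U M (Is : seq {set 'I_n}) J :
  red_seq U M (rcons Is J) = obind (fun T => red (last U Is) T J) (red_seq U M Is).
Proof.
elim: Is U M => [|K Is IH] U M /=; first by case: red.
by case: red => //= T; rewrite IH.
Qed.

Lemma red_seq_chain U M (Is : seq {set 'I_n}) J :
  J != set0 -> path (fun A B : {set 'I_n} => B \subset A) U (rcons Is J) ->
  (forall X, X \subset U :\: J -> psub M X \in unitmx) ->
  red_seq U M (rcons Is J) = red U M J.
Proof.
elim/last_ind: Is J => [|Is K IH] J J0 /=; first by case: red.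
rewrite rcons_path last_rcons => /andP[chainK JK] unitUJ.
have KU : K \subset U.
  have supT : transitive (fun A B : {set 'I_n} => B \subset A).
    by move=> B A C AB BC; apply: subset_trans AB.
  by have /allP := order_path_min supT chainK; apply; rewrite mem_rcons mem_head.
have K0 : K != set0 by apply: contraNneq J0 => K0; rewrite -subset0 -K0.
have unitUK X : X \subset U :\: K -> psub M X \in unitmx.
  by move=> XUK; apply: unitUJ; apply: subset_trans XUK _; rewrite setDS.
rewrite red_seq_rcons last_rcons IH //.
by have [T -> <-] := red_red J0 JK KU (unitUK _ (subxx _)) (unitUJ _ (subxx _)).
Qed.

End Reduction.

Theorem lemma2 (n : nat) (M : 'M[W]_n) (m : nat) (I : nat -> {set 'I_n}) :
  (1 <= m)%N ->
  (forall k, (1 <= k)%N -> (k < m)%N -> I k.+1 \subset I k) ->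
  I m != set0 ->
  upper_tri_nzdiag (psub M (~: I m)) ->
  exists N : 'M[W]_n,
    red_seq [set: 'I_n] M [seq I k | k <- iota 1 m] = Some N /\
    red [set: 'I_n] M (I m) = Some N.
Proof.
move=> m_gt0 chain Im0 triIm.
have unitIm (X : {set 'I_n}) : X \subset setT :\: I m -> psub M X \in unitmx.
  by move=> XIm; apply: psub_unitmx_sub triIm; rewrite -setTD.
have chainI : path (fun A B : {set 'I_n} => B \subset A) setT [seq I k | k <- iota 1 m].
  apply/(pathP setT) => i; rewrite size_map size_iota => im.
  rewrite (nth_map 0) ?size_iota // nth_iota //.
  case: i im => [|i] im /=; first exact: subsetT.
  by rewrite (nth_map 0) ?size_iota ?nth_iota ?chain //; apply: ltnW.
have iotaE : iota 1 m = rcons (iota 1 m.-1) m.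
  by rewrite -{1}(prednK m_gt0) -[m.-1.+1]addn1 iotaD cats1 add1n prednK.
rewrite iotaE map_rcons in chainI *.
rewrite red_seq_chain // (redE Im0 (subsetT _) (unitIm _ (subxx _))).
by eexists.
Qed.
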